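(* Let $\mathcal S$ be a critical poset, with $a$, $\mathcal S_a$, $\mathcal V_\lambda(\mathcal S)=(V^{\mathcal S};V^{\mathcal S}_i)_{i\in\mathcal S}$ and $\mathcal V(\mathcal S_a)=(V^{\mathcal S};V^{\mathcal S}_i)_{i\in\mathcal S_a}$ as in the context, and write $V^{\mathcal S}_\lambda$ for the subspace at $a$. Let $\chi^a=(\chi^a_i)_{i\in\mathcal S_a}\in\mathbb R_+^{|\mathcal S_a|}$ be a weight such that $\mathcal V(\mathcal S_a)$ is $\chi^a$-stable, let $R=\min\{\dim M-\sum_{i\in\mathcal S_a}\chi^a_i\dim(V^{\mathcal S}_i\cap M): M \text{ a proper subspace of } V^{\mathcal S}\}$, let $0<\varepsilon<R$, $T=1+(R-\varepsilon)\dim V^{\mathcal S}_\lambda/\dim V^{\mathcal S}$, and define $\chi^{\mathcal S}_i=\chi^a_iT^{-1}$ for $i\in\mathcal S_a$ and $\chi^{\mathcal S}_a=(R-\varepsilon)T^{-1}$. Then $\mathcal V_\lambda(\mathcal S)$ is $\chi^{\mathcal S}$-stable for every $\lambda\in\mathbb C$.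
   Context: The critical posets are $(1,1,1,1),(2,2,2),(1,3,3),(1,2,5),(N,4)$, where $(t_1,\dots,t_s)$ is the disjoint union of incomparable chains of sizes $t_i$, $N$ has elements $a_1,a_2,b_1,b_2$ with exactly $a_1\prec b_1,a_2\prec b_1,a_2\prec b_2$, and $(N,4)$ is the disjoint union of $N$ and a 4-chain. A subspace representation $(V;V_i)_{i\in\mathcal P}$ of a poset $\mathcal P$ consists of a finite-dimensional complex space $V$ and subspaces with $V_i\subseteq V_j$ when $i\prec j$. For $\chi\in\mathbb R_+^{|\mathcal P|}$ it is $\chi$-stable if $\sum_i\chi_i\dim V_i=\dim V$ and $\sum_i\chi_i\dim(V_i\cap M)<\dim M$ for every subspace $0\neq M\subsetneq V$. With $e_i$ standard basis vectors, $e_{i_1\dots i_k}=e_{i_1}+\dots+e_{i_k}$, $\langle\cdots\rangle$ span, define $\mathcal V_\lambda(\mathcal S)$, $\lambda\in\mathbb C$ (chains bottom to top): $(1,1,1,1)$: $\mathbb C^2$; $\langle e_1\rangle,\langle e_2\rangle,\langle e_1+e_2\rangle,\langle e_1+\lambda e_2\rangle$. $(2,2,2)$: $\mathbb C^3$; $\langle e_{123}\rangle\subset\langle e_{123},e_1+\lambda e_3\rangle$; $\langle e_1\rangle\subset\langle e_1,e_2\rangle$; $\langle e_3\rangle\subset\langle e_2,e_3\rangle$. $(1,3,3)$: $\mathbb C^4$; $\langle e_{123},e_{24}\rangle$; $\langle e_4\rangle\subset\langle e_1,e_4\rangle\subset\langle e_1,e_4,e_2+\lambda e_3\rangle$; $\langle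 e_3\rangle\subset\langle e_2,e_3\rangle\subset\langle e_1,e_2,e_3\rangle$. $(1,2,5)$: $\mathbb C^6$; $\langle e_{123},e_{245},e_{16}\rangle$; $\langle e_5,e_6\rangle\subset\langle e_1,e_2,e_5,e_6\rangle$; $\langle e_4\rangle\subset\langle e_3,e_4\rangle\subset\langle e_2,e_3,e_4\rangle\subset\langle e_1,e_2,e_3,e_4\rangle\subset\langle e_1,e_2,e_3,e_4,e_5+\lambda e_6\rangle$. $(N,4)$: $\mathbb C^5$; 4-chain $\langle e_4\rangle\subset\langle e_3,e_4\rangle\subset\langle e_2,e_3,e_4\rangle\subset\langle e_1,e_2,e_3,e_4\rangle$; $a_1\mapsto\langle e_{235},e_{134}\rangle$, $a_2\mapsto\langle e_5\rangle$, $b_1\mapsto\langle e_{235},e_{134},e_5,e_3+\lambda e_4\rangle$, $b_2\mapsto\langle e_1,e_2,e_5\rangle$. $a\in\mathcal S$ is the unique element whose subspace depends on $\lambda$; $\mathcal S_a=\mathcal S\setminus\{a\}$; $\mathcal V(\mathcal S_a)$ is $\mathcal V_\lambda(\mathcal S)$ with the subspace at $a$ deleted. *)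

From HB Require Import structures.
From mathcomp Require Import all_boot all_order all_algebra.
From mathcomp Require Import complex.
From mathcomp Require Import reals.
Set Implicit Arguments. Unset Strict Implicit. Unset Printing Implicit Defensive.
Import Order.TTheory GRing.Theory Num.Theory.
Local Open Scope ring_scope.

Section CriticalPosets.
Variable R : realType.
Local Notation C := (complex R).

(* Generic notions.  A subspace representation with ambient space     *)
(* V = C^n (row vectors 'rV_n) assigns to each element of a finite    *)
(* poset P a subspace of C^n, represented (mxalgebra style) by a      *)
(* square matrix whose row space is the subspace.                    *)

Definition spanv n (vs : seq 'rV[C]_n) : 'M[C]_n :=
  <<\matrix_(i < size vs, j < n) (nth 0 vs i) 0 j>>%MS.

(* The weight
   chi lives in R_+^{|D|}, i.e. chi_i > 0 for i in D (its values outside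
   D are irrelevant).  Subspaces M of C^n are row spaces of arbitrary
   matrices M : 'M_(k, n); dim M = \rank M. *)
Definition stable_on (P : finType) (D : pred P) n
    (U : P -> 'M[C]_n) (chi : P -> R) : Prop :=
  [/\ forall i, D i -> 0 < chi i,
      \sum_(i | D i) chi i * (\rank (U i))%:R = n%:R
    & forall k (M : 'M[C]_(k, n)), (0 < \rank M)%N -> (\rank M < n)%N ->
        \sum_(i | D i) chi i * (\rank (U i :&: M)%MS)%:R < (\rank M)%:R ].

Definition defect_min (P : finType) (D : pred P) n
    (U : P -> 'M[C]_n) (chi : P -> R) (r : R) : Prop :=
  (exists k (M : 'M[C]_(k, n)), [/\ (0 < \rank M)%N, (\rank M < n)%N &
      r = (\rank M)%:R - \sum_(i | D i) chi i * (\rank (U i :&: M)%MS)%:R])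
  /\ (forall k (M : 'M[C]_(k, n)), (0 < \rank M)%N -> (\rank M < n)%N ->
      r <= (\rank M)%:R - \sum_(i | D i) chi i * (\rank (U i :&: M)%MS)%:R).

Inductive critical := P1111 | P222 | P133 | P125 | PN4.

Definition csize (S : critical) : nat :=
  match S with P1111 => 4 | P222 => 6 | P133 => 7 | P125 => 8 | PN4 => 8 end.

Definition cdim (S : critical) : nat :=
  match S with P1111 => 2 | P222 => 3 | P133 => 4 | P125 => 6 | PN4 => 5 end.

(* Elements are numbered 0 .. |S|-1 as follows:
   (1,1,1,1): 0 | 1 | 2 | 3                      (a = 3)
   (2,2,2)  : 0<1 | 2<3 | 4<5                    (a = 1)
   (1,3,3)  : 0 | 1<2<3 | 4<5<6                  (a = 3)
   (1,2,5)  : 0 | 1<2 | 3<4<5<6<7                (a = 7)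
   (N,4)    : 0<1<2<3 | a1=4, a2=5, b1=6, b2=7 with 4<6, 5<6, 5<7  (a = 6) *)

(* strict order relation (transitively closed list of pairs) *)
Definition clt_pairs (S : critical) : seq (nat * nat) :=
  match S with
  | P1111 => [::]
  | P222 => [:: (0,1); (2,3); (4,5)]
  | P133 => [:: (1,2); (1,3); (2,3); (4,5); (4,6); (5,6)]
  | P125 => [:: (1,2); (3,4); (3,5); (3,6); (3,7); (4,5); (4,6); (4,7);
                (5,6); (5,7); (6,7)]
  | PN4 => [:: (0,1); (0,2); (0,3); (1,2); (1,3); (2,3); (4,6); (5,6); (5,7)]
  end.

Definition cle (S : critical) : rel 'I_(csize S) :=
  fun i j => (i == j) || ((nat_of_ord i, nat_of_ord j) \in clt_pairs S).

Definition ca (S : critical) : 'I_(csize S) :=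
  match S return 'I_(csize S) with
  | P1111 => @Ordinal 4 3 isT
  | P222 => @Ordinal 6 1 isT
  | P133 => @Ordinal 7 3 isT
  | P125 => @Ordinal 8 7 isT
  | PN4 => @Ordinal 8 6 isT
  end.

(* standard basis vector e_i of C^(n+1), 1-based *)
Definition ev {n} (i : nat) : 'rV[C]_n.+1 := delta_mx 0 (inord i.-1).

Definition cgens (S : critical) (lam : C) : seq (seq 'rV[C]_(cdim S)) :=
  match S return seq (seq 'rV[C]_(cdim S)) with
  | P1111 =>
      [:: [:: ev 1]; [:: ev 2]; [:: ev 1 + ev 2]; [:: ev 1 + lam *: ev 2]]
  | P222 =>
      let e123 := ev 1 + ev 2 + ev 3 in
      [:: [:: e123]; [:: e123; ev 1 + lam *: ev 3];
          [:: ev 1]; [:: ev 1; ev 2];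
          [:: ev 3]; [:: ev 2; ev 3]]
  | P133 =>
      let e123 := ev 1 + ev 2 + ev 3 in
      let e24 := ev 2 + ev 4 in
      [:: [:: e123; e24];
          [:: ev 4]; [:: ev 1; ev 4]; [:: ev 1; ev 4; ev 2 + lam *: ev 3];
          [:: ev 3]; [:: ev 2; ev 3]; [:: ev 1; ev 2; ev 3]]
  | P125 =>
      let e123 := ev 1 + ev 2 + ev 3 in
      let e245 := ev 2 + ev 4 + ev 5 in
      let e16 := ev 1 + ev 6 in
      [:: [:: e123; e245; e16];
          [:: ev 5; ev 6]; [:: ev 1; ev 2; ev 5; ev 6];
          [:: ev 4]; [:: ev 3; ev 4]; [:: ev 2; ev 3; ev 4];
          [:: ev 1; ev 2; ev 3; ev 4];
          [:: ev 1; ev 2; ev 3; ev 4; ev 5 + lam *: ev 6]]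
  | PN4 =>
      let e235 := ev 2 + ev 3 + ev 5 in
      let e134 := ev 1 + ev 3 + ev 4 in
      [:: [:: ev 4]; [:: ev 3; ev 4]; [:: ev 2; ev 3; ev 4];
          [:: ev 1; ev 2; ev 3; ev 4];
          [:: e235; e134]; [:: ev 5];
          [:: e235; e134; ev 5; ev 3 + lam *: ev 4];
          [:: ev 1; ev 2; ev 5]]
  end.

Definition cV (S : critical) (lam : C) (i : 'I_(csize S)) : 'M[C]_(cdim S) :=
  spanv (nth [::] (cgens S lam) i).

End CriticalPosets.
Arguments cV {R} S lam i.
Arguments cgens {R} S lam.

(* The only property of V_lambda(S) that matters is that its subspace at a is a
   hyperplane of V^S = C^n; T is chosen so that the total weight is n again.
   For a proper subspace M of dimension m, the chi^a-part of its weight is at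
   most m - R by definition of R and the new summand is at most (R - eps) m, so
   after multiplying by T stability reduces to (R - eps) m (n - d) < R n, where
   d = dim V_lambda >= n - 1; this holds as m <= n and eps > 0. *)
From HB Require Import structures.
From mathcomp Require Import all_boot all_order all_algebra.
From mathcomp Require Import complex.
From mathcomp Require Import reals.
From mathcomp Require Import ring lra.
Import Order.TTheory GRing.Theory Num.Theory.
Local Open Scope ring_scope.

Lemma eq_inord n (i : 'I_n.+1) k : (k <= n)%N -> (i == inord k) = (val i == k).
Proof. by move=> hk; rewrite -val_eqE /= inordK. Qed.

Ltac entrywise_ring :=
  apply/matrixP => [[[|[|[|[|[|[|?]]]]]] ?] [[|[|[|[|[|[|?]]]]]] ?]] //;
  rewrite !mxE !big_ord_recr big_ord0 /= /ev !mxE /= ?eq_inord //=; ring.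

Lemma rank_cV_ca (R : realType) S lam :
  \rank (@cV R S lam (ca S)) = (cdim S).-1.
Proof.
case: S; rewrite /cV /spanv genmxE /=; apply/eqP/row_freeP.
- exists (\matrix_(i < 2, j < 1) (if (i : nat) == 0%N then 1 else 0)).
  entrywise_ring.
- exists (\matrix_(i < 3, j < 2)
     match (i : nat), (j : nat) with 1, 0 => 1 | 0, 1 => 1 | 1, 1 => -1 | _, _ => 0 end).
  entrywise_ring.
- exists (\matrix_(i < 4, j < 3)
     match (i : nat), (j : nat) with 0, 0 => 1 | 3, 1 => 1 | 1, 2 => 1 | _, _ => 0 end).
  entrywise_ring.
- exists (\matrix_(i < 6, j < 5) if (i : nat) == j then 1 else 0).
  entrywise_ring.
- exists (\matrix_(i < 5, j < 4)
     match (i : nat), (j : nat) with 1, 0 => 1 | 0, 1 => 1 | 4, 2 => 1 | 1, 2 => -1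
       | 2, 3 => 1 | 1, 3 => -1 | 0, 3 => -1 | _, _ => 0 end).
  entrywise_ring.
Qed.

(* Read Rm, n, d, m, dM, s as R, dim V, dim V_a, dim M, dim (V_a :&: M) and the
   chi^a-weight of M. *)
Lemma weight_extension_lt (F : realFieldType) (Rm eps n d m dM s : F) :
  0 < eps -> eps < Rm -> 0 < n -> n <= d + 1 -> 0 <= m <= n -> dM <= m ->
  s <= m - Rm ->
  (Rm - eps) * dM + s < m * (1 + (Rm - eps) * d / n).
Proof.
move=> eps_gt0 epsR n_gt0 n_le /andP[m_ge0 m_le] dM_le s_le.
have -> : m * (1 + (Rm - eps) * d / n) = (m * n + (Rm - eps) * d * m) / n.
  by field; rewrite gt_eqF.
rewrite ltr_pdivlMr //.
have r_gt0 : 0 < Rm - eps by rewrite subr_gt0.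
(* The gap m n + r d m - (r dM + s) n is h1 + h2 + h3 + h4 + h5 with r = Rm - eps. *)
have h1 : 0 <= (Rm - eps) * (m - dM) * n.
  by rewrite !mulr_ge0 ?subr_ge0 // ltW.
have h2 : 0 <= (m - Rm - s) * n by rewrite mulr_ge0 ?(ltW n_gt0) //; lra.
have h3 : 0 <= (Rm - eps) * m * (d + 1 - n) by rewrite !mulr_ge0 ?subr_ge0 // ltW.
have h4 : 0 <= (Rm - eps) * (n - m) by rewrite mulr_ge0 ?subr_ge0 // ltW.
have h5 : 0 < eps * n by rewrite mulr_gt0.
lra.
Qed.

Lemma big_weight_extension (F : fieldType) (P : finType) (a : P) (w : P -> F)
    (x T : F) (f : P -> F) :
  \sum_(i | predT i) (if i == a then x / T else w i / T) * f i
  = (x * f a + \sum_(i | predC1 a i) w i * f i) / T.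
Proof.
rewrite (bigD1 a) //= eqxx mulrDl mulrAC big_distrl /=; congr (_ + _).
by apply: eq_bigr => i /negbTE ->; rewrite mulrAC.
Qed.

Lemma stable_on_weight_extension (R : realType) (P : finType) (a : P) n
    (U : P -> 'M[complex R]_n) (chia : P -> R) (Rm eps : R) :
  (n.-1 <= \rank (U a))%N ->
  stable_on (predC1 a) U chia -> defect_min (predC1 a) U chia Rm ->
  0 < eps -> eps < Rm ->
  let T := 1 + (Rm - eps) * (\rank (U a))%:R / n%:R in
  let chiS := fun i => if i == a then (Rm - eps) / T else chia i / T in
  stable_on predT U chiS.
Proof.
move=> hyperplane [chia_gt0 chia_sum _] [[k [M [_ M_proper _]]] Rm_min].
move=> eps_gt0 epsR T chiS.
have n_gt0 : (0 < n)%N by apply: leq_ltn_trans M_proper.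
have r_gt0 : 0 < Rm - eps by rewrite subr_gt0.
have T_gt0 : 0 < T.
  by rewrite /T; apply: ltr_wpDr => //; rewrite divr_ge0 // mulr_ge0 // ltW.
split.
- by move=> i _; rewrite /chiS; case: eqP => [_|/eqP ia]; rewrite divr_gt0 ?chia_gt0.
- rewrite big_weight_extension chia_sum -[RHS](mulfK (lt0r_neq0 T_gt0)) mulrDr mulr1.
  by rewrite addrC mulrCA mulfV ?mulr1 // pnatr_eq0 -lt0n.
- move=> k' M' M'_gt0 M'_proper.
  rewrite big_weight_extension ltr_pdivrMr //.
  apply: weight_extension_lt => //.
  + by rewrite ltr0n.
  + by rewrite natr1 ler_nat (leq_trans (leqSpred n)) ?ltnS.
  + by rewrite !ler0n ler_nat ltnW.
  + by rewrite ler_nat mxrankS ?capmxSr.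
  + by have := Rm_min _ _ M'_gt0 M'_proper; lra.
Qed.

Theorem proposition2 (R : realType) (S : critical) (chia : 'I_(csize S) -> R)
    (Rm eps : R) (lam : complex R) :
  stable_on (predC1 (ca S)) (cV S lam) chia ->
  defect_min (predC1 (ca S)) (cV S lam) chia Rm ->
  0 < eps -> eps < Rm ->
  let T := 1 + (Rm - eps) * (\rank (cV S lam (ca S)))%:R / (cdim S)%:R in
  let chiS := fun i => if i == ca S then (Rm - eps) / T else chia i / T in
  stable_on predT (cV S lam) chiS.
Proof. exact: stable_on_weight_extension (eq_leq (esym (rank_cV_ca R S lam))). Qed.
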